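(* In the setting described in the context, for every $x\in X$ it holds that $|\pi^{-1}(\{\pi(x)\})|\leq m^{2^r[G:G']}$.
   Context: $G$ is a countable group with a finite index normal subgroup $G'\cong\mathbb Z^r$ ($r\in\mathbb N$); identify $G'$ with $\mathbb Z^r$ (written multiplicatively inside $G$), standard basis $e_1,\dots,e_r$. For each $j$, $(p^i_j)_i$ are strictly increasing positive integers with $p^i_j\mid p^{i+1}_j$, $p^i_j>2i+1$; $\Gamma_i=\langle p^i_je_j:1\le j\le r\rangle\le G'$, with $[\Gamma_i:\Gamma_{i+1}]>1/(1-2^{-(1/2)^{i+1}})$. $D_i\subseteq G'$ are fundamental domains of $G'/\Gamma_i$ of box form $\{x:-q^i_{1,j}\le x_j<q^i_{2,j}\}$ ($q^i_{1,j},q^i_{2,j}>i$, $q^i_{1,j}+q^i_{2,j}=p^i_j$), with $1_G\in D_i\subseteq D_{i+1}$, $\bigcup_iD_i=G'$, and $D_i=\bigcup_{\gamma\in D_i\cap\Gamma_{i-1}}\gamma D_{i-1}$ for $i\ge2$. $R\subseteq G$ is a finite set of representatives of $G/G'$ with $1_G\in R$. Let $m\ge2$, $\Sigma=\{1,\dots,m,\beta\}$ with $\beta$ a new symbol, $\alpha_i\in\{1,\dots,m\}$ with $\alpha_i\equiv i\pmod m$. Define $\eta\in\Sigma^G$: $J(0)=\{1_G\}$; $\eta(g)=\alpha_1$ for $g\in\Gamma_1$ and $\eta(g)=\beta$ for $g\in\Gamma_1(R\setminus\{1_G\})$; for $n\ge1$, $J(n)=D_n\setminus\bigcup_{i=0}^{n-1}\Gamma_{i+1}J(i)$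 and $\eta(g)=\alpha_{n+1}$ for $g\in\Gamma_{n+1}J(n)R$. The shift is $\sigma^g(x)(h)=x(g^{-1}h)$ and $X=\overline{O_\sigma(\eta)}$ is the closure of the shift orbit of $\eta$. For $y\in\Sigma^G$, $\mathrm{Per}(y,\Gamma,\alpha)=\{g\in G:y(\gamma^{-1}g)=\alpha\ \forall\gamma\in\Gamma\}$, and $C_n=\{y\in X:\mathrm{Per}(y,\Gamma_n,\alpha)=\mathrm{Per}(\eta,\Gamma_n,\alpha)\ \forall\alpha\in\Sigma\}$. The odometer is $\overleftarrow G=\{(\Gamma_ng_n)_n\in\prod_n\Gamma_n\backslash G:\Gamma_ng_{n+1}=\Gamma_ng_n\ \forall n\}$ (right cosets), with $G$-action $(\Gamma_ng_n)_n\mapsto(\Gamma_ng_ng^{-1})_n$, and $\pi:X\to\overleftarrow G$ is the factor map onto it (the maximal equicontinuous factor) given by $\pi(x)=(\Gamma_ng_n)_n$ if and only if $x\in\sigma^{g_n^{-1}}C_n$ for every $n$. *)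

From mathcomp Require Import all_boot all_order all_algebra.
From Stdlib Require Reals.
Set Implicit Arguments. Unset Strict Implicit. Unset Printing Implicit Defensive.
Import GRing.Theory Num.Theory.
Local Open Scope ring_scope.

(* Z^r, identified with G' ; written additively here. *)
Definition Zr (r : nat) := {ffun 'I_r -> int}.
Definition vadd r (a b : Zr r) : Zr r := [ffun j => a j + b j].
Definition vneg r (a : Zr r) : Zr r := [ffun j => - a j].
Definition vzero r : Zr r := [ffun _ => 0].

Definition is_group (G : Type) (mul : G -> G -> G) (inv : G -> G) (e : G) :=
  [/\ forall x y z, mul x (mul y z) = mul (mul x y) z,
      forall x, mul e x = x & forall x, mul (inv x) x = e].

Definition Gam r (p : nat -> 'I_r -> nat) (n : nat) (a : Zr r) : Prop :=
  forall j, a j \in dvdz (p n j)%:Z.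

Definition Dom r (q1 q2 : nat -> 'I_r -> nat) (n : nat) (a : Zr r) : Prop :=
  forall j, - ((q1 n j)%:Z) <= a j < (q2 n j)%:Z.

Definition gindex r (p : nat -> 'I_r -> nat) (i : nat) : nat :=
  (\prod_(j < r) (p i.+1 j %/ p i j))%N.

Definition index_cond (k i : nat) : Prop :=
  let one := Raxioms.INR 1 in let two := Raxioms.INR 2 in
  Rdefinitions.Rlt
    (Rdefinitions.Rdiv one
       (Rdefinitions.Rminus one
          (Rpower.Rpower two (Rdefinitions.Ropp (Rpow_def.pow (Rdefinitions.Rinv two) i.+1)))))
    (Raxioms.INR k).

(* Jf n i = J(i) for i <= n ;  J(0) = {0},
   J(n) = D_n \ U_{i=0}^{n-1} Gamma_{i+1} J(i) *)
Fixpoint Jf r (p q1 q2 : nat -> 'I_r -> nat) (n : nat) : nat -> Zr r -> Prop :=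
  match n with
  | 0 => fun _ a => a = vzero r
  | n'.+1 => fun i a =>
      if (i <= n')%N then Jf p q1 q2 n' i a
      else Dom q1 q2 n a /\
           ~ (exists i', (i' < n)%N /\ exists y, Jf p q1 q2 n' i' y /\
                              Gam p i'.+1 (vadd a (vneg y)))
  end.
Definition J r (p q1 q2 : nat -> 'I_r -> nat) (n : nat) : Zr r -> Prop :=
  Jf p q1 q2 n n.

(* Alphabet Sigma = {1,..,m, beta}: Some k stands for the symbol k+1, None for beta *)
Definition Sigma (m : nat) := option 'I_m.
Definition beta m : Sigma m := None.
(* alpha_i in {1..m} with alpha_i = i mod m *)
Definition alpha (m i : nat) : Sigma m :=
  match m return Sigma m with
  | 0 => None
  | m'.+1 => Some (inord ((i + m') %% m'.+1))
  end.

Definition shift (G : Type) (mul : G -> G -> G) (inv : G -> G) (A : Type)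
  (g : G) (x : G -> A) : G -> A := fun h => x (mul (inv g) h).

(* closure of the shift orbit of eta in A^G (product topology, discrete A):
   every cylinder neighbourhood of x meets the orbit. *)
Definition in_orbit_closure (G : eqType) (mul : G -> G -> G) (inv : G -> G) (A : Type)
  (eta x : G -> A) : Prop :=
  forall F : seq G, exists g, forall h, h \in F -> x h = shift mul inv g eta h.

Definition Per (G : Type) (mul : G -> G -> G) (inv : G -> G) r (iota : Zr r -> G)
  (p : nat -> 'I_r -> nat) (A : Type) (y : G -> A) (n : nat) (al : A) (g : G) : Prop :=
  forall c, Gam p n c -> y (mul (inv (iota c)) g) = al.

Definition Cset (G : eqType) (mul : G -> G -> G) (inv : G -> G) r (iota : Zr r -> G)
  (p : nat -> 'I_r -> nat) (A : Type) (eta : G -> A) (n : nat) (y : G -> A) : Prop :=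
  in_orbit_closure mul inv eta y /\
  forall al g, Per mul inv iota p y n al g <-> Per mul inv iota p eta n al g.

(* pi(x) = (Gamma_n g_n)_n  iff  x in sigma^{g_n^{-1}} C_n for every n >= 1 *)
Definition pi_is (G : eqType) (mul : G -> G -> G) (inv : G -> G) r (iota : Zr r -> G)
  (p : nat -> 'I_r -> nat) (A : Type) (eta : G -> A) (x : G -> A) (gs : nat -> G) : Prop :=
  forall n, (1 <= n)%N ->
    exists y, Cset mul inv iota p eta n y /\
              forall h, x h = shift mul inv (inv (gs n)) y h.

(* |S| <= N for a possibly infinite set S of functions (up to extensional equality) *)
Definition card_le (G A : Type) (S : (G -> A) -> Prop) (N : nat) : Prop :=
  forall (k : nat) (f : 'I_k -> G -> A),
    (forall i, S (f i)) ->
    (forall i i', (forall h, f i h = f i' h) -> i = i') ->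
    (k <= N)%N.

From mathcomp Require Import all_boot all_order all_algebra.
From mathcomp Require Import zify ring lra boolp.
Import GRing.Theory Num.Theory.
Set Implicit Arguments. Unset Strict Implicit. Unset Printing Implicit Defensive.
Local Open Scope ring_scope.

(* Let y_1, ..., y_k be distinct points of the fibre over (Gamma_n g_n)_n and
   F a finite window on which they are pairwise distinct.  As y_i lies in
   sigma^(g_n^-1) C_n, matching it against a translate of eta on a window
   containing D_(n+1) and R forces y_i(h) = eta(c_i g_n h) with c_i in Gamma_n.
   Write g_n h = b rho with b in Z^r and rho in R.  If b has level i < n, i.e.
   lies in Gamma_(i+1) J(i), this value does not depend on c_i.  Otherwise b is
   a hole, and the value only depends on rho and on the parities of the
   coordinates of the Gamma_n-cell of b: two such holes closer than p_n differ
   by a translation keeping the D_n-representative inside D_n, and such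
   translations preserve levels.  The differences of lattice parts of g_n h and
   g_n h' (h, h' in F) are conjugates of h' h^-1 by elements of R, so they are
   shorter than p_n once n is large.  Then each y_i is coded on F by a map
   R x {0,1}^r -> {1, ..., m}, whence k <= m^(2^r [G:G']). *)

Lemma vaddE r (a b : Zr r) : vadd a b = a + b.
Proof. by apply/ffunP=> j; rewrite !ffunE. Qed.

Lemma vnegE r (a : Zr r) : vneg a = - a.
Proof. by apply/ffunP=> j; rewrite !ffunE. Qed.

Lemma vzeroE r : vzero r = 0.
Proof. by apply/ffunP=> j; rewrite !ffunE. Qed.

(* Quotients by [p] of points closer than [p] differ by at most one, so equal
   parity forces equal quotients. *)
Lemma modz_shift_same_parity (x x' p : int) : 0 < p -> `|x' - x| < p ->
  (((x %/ p)%Z %% 2)%Z == 0) = (((x' %/ p)%Z %% 2)%Z == 0) ->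
  (x %% p)%Z + (x' - x) = (x' %% p)%Z.
Proof.
move=> p_gt0 near same_parity.
have ex := divz_eq x p; have ex' := divz_eq x' p.
have r_ge0 : 0 <= (x %% p)%Z by apply: modz_ge0; lia.
have r'_ge0 : 0 <= (x' %% p)%Z by apply: modz_ge0; lia.
have r_lt : (x %% p)%Z < p by apply: ltz_pmod.
have r'_lt : (x' %% p)%Z < p by apply: ltz_pmod.
set k := (x %/ p)%Z in ex same_parity; set k' := (x' %/ p)%Z in ex' same_parity.
have ek := divz_eq k 2; have ek' := divz_eq k' 2.
have s_ge0 : 0 <= (k %% 2)%Z by apply: modz_ge0.
have s'_ge0 : 0 <= (k' %% 2)%Z by apply: modz_ge0.
have s_lt : (k %% 2)%Z < 2 by apply: ltz_pmod.
have s'_lt : (k' %% 2)%Z < 2 by apply: ltz_pmod.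
have eq_s : (k %% 2)%Z = (k' %% 2)%Z.
  by move: same_parity; case: (eqVneq (k %% 2)%Z 0); case: (eqVneq (k' %% 2)%Z 0) => //=; lia.
set t := (k %% 2)%Z in ek eq_s s_ge0 s_lt; set t' := (k' %% 2)%Z in ek' eq_s s'_ge0 s'_lt.
set u := (k %/ 2)%Z in ek; set u' := (k' %/ 2)%Z in ek'.
set rr := (x %% p)%Z in ex r_ge0 r_lt *; set rr' := (x' %% p)%Z in ex' r'_ge0 r'_lt *.
clearbody k k' rr rr' u u' t t'.
have hi : (k' - k) * p < 2 * p by nia.
have lo : - (2 * p) < (k' - k) * p by nia.
have dk_lt : k' - k < 2 by nia.
have dk_gt : -2 < k' - k by nia.
have eq_k : k = k' by lia.
subst k'; lia.
Qed.

Ltac Zr_ring := apply/ffunP => ?; rewrite !ffunE; ring.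

Section Lattice.
Variables (r : nat) (p : nat -> 'I_r -> nat).

Lemma Gam0 n : Gam p n (0 : Zr r).
Proof. by move=> j; rewrite ffunE rpred0. Qed.

Lemma GamD n (a b : Zr r) : Gam p n a -> Gam p n b -> Gam p n (a + b).
Proof. by move=> ha hb j; rewrite ffunE rpredD. Qed.

Lemma GamN n (a : Zr r) : Gam p n a -> Gam p n (- a).
Proof. by move=> ha j; rewrite ffunE rpredN. Qed.

Lemma GamB n (a b : Zr r) : Gam p n a -> Gam p n b -> Gam p n (a - b).
Proof. by move=> ha hb; apply/GamD/GamN. Qed.

Record box_tower (q1 q2 : nat -> 'I_r -> nat) : Prop := {
  p_pos : forall i j, (1 <= i)%N -> (0 < p i j)%N;
  p_incr : forall i j, (1 <= i)%N -> (p i j < p i.+1 j)%N;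
  p_dvd : forall i j, (1 <= i)%N -> (p i j %| p i.+1 j)%N;
  p_big : forall i j, (1 <= i)%N -> (2 * i + 1 < p i j)%N;
  q_sum : forall i j, (1 <= i)%N -> (q1 i j + q2 i j)%N = p i j;
  D_one : forall i, (1 <= i)%N -> Dom q1 q2 i (vzero r);
  D_nest : forall i a, (1 <= i)%N -> Dom q1 q2 i a -> Dom q1 q2 i.+1 a;
  D_cover : forall a, exists i, (1 <= i)%N /\ Dom q1 q2 i a;
  D_decomp : forall i a, (2 <= i)%N ->
      (Dom q1 q2 i a <->
       exists c, [/\ Dom q1 q2 i c, Gam p i.-1 c & Dom q1 q2 i.-1 (vadd a (vneg c))])
}.

Section Tower.
Variables q1 q2 : nat -> 'I_r -> nat.
Hypothesis tower : box_tower q1 q2.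
Local Notation D := (Dom q1 q2).

Lemma Dom_finite n : exists s : seq (Zr r), forall a, D n a -> a \in s.
Proof.
set B := (\max_(j < r) (q1 n j + q2 n j))%N.
pose shifted (i : {ffun 'I_r -> 'I_(B.*2.+1)}) : Zr r := [ffun j => (i j)%:Z - B%:Z].
exists [seq shifted i | i <- enum {ffun 'I_r -> 'I_(B.*2.+1)}] => a ha.
have hB j : (q1 n j + q2 n j <= B)%N by apply: (leq_bigmax j).
pose i : {ffun 'I_r -> 'I_(B.*2.+1)} := [ffun j => inord (absz (a j + B%:Z))].
suff -> : a = shifted i by apply: map_f; rewrite mem_enum.
apply/ffunP => j; have := ha j; have := hB j; clearbody B => h1 h2.
have a_abs : (absz (a j + B%:Z))%:Z = a j + B%:Z by rewrite gez0_abs //; lia.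
rewrite /shifted /i !ffunE inordK; first by rewrite a_abs addrK.
set x := a j in h2 a_abs *; lia.
Qed.

Lemma Gam_le i k (a : Zr r) : (1 <= i)%N -> (i <= k)%N -> Gam p k a -> Gam p i a.
Proof.
move=> i1 /subnK <-; elim: (k - i)%N => [|d IH] //= h; apply: IH => j.
by apply: dvdz_trans (h j); rewrite dvdzE addSn; apply: (p_dvd tower); lia.
Qed.

Lemma Dom_le i k (a : Zr r) : (1 <= i)%N -> (i <= k)%N -> D i a -> D k a.
Proof.
move=> i1 /subnK <-; elim: (k - i)%N => [|d IH] //= h.
by rewrite addSn; apply: (D_nest tower); [lia | exact: IH].
Qed.

Lemma Dom0 n : (1 <= n)%N -> D n 0.
Proof. by move=> n1; rewrite -vzeroE; apply: (D_one tower). Qed.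

Definition box_rep n (a : Zr r) : Zr r :=
  [ffun j => ((a j + (q1 n j)%:Z) %% (p n j)%:Z)%Z - (q1 n j)%:Z].

Lemma Dom_box_rep n (a : Zr r) : (1 <= n)%N -> D n (box_rep n a).
Proof.
move=> n1 j; rewrite ffunE; have := q_sum tower j n1; have := p_pos tower j n1.
set P := p n j; set x := (a j + _)%Z => hp hs.
have : 0 <= (x %% P%:Z)%Z by apply: modz_ge0; lia.
have : (x %% P%:Z)%Z < P%:Z by apply: ltz_pmod; lia.
lia.
Qed.

Lemma Gam_sub_box_rep n (a : Zr r) : Gam p n (a - box_rep n a).
Proof.
move=> j; rewrite !ffunE; apply/dvdzP; exists ((a j + (q1 n j)%:Z) %/ (p n j)%:Z)%Z.
have := divz_eq (a j + (q1 n j)%:Z) (p n j)%:Z.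
set X := (_ %/ _)%Z; set Y := (_ %% _)%Z; clearbody X Y; lra.
Qed.

Lemma Dom_Gam_eq n (d d' : Zr r) :
  (1 <= n)%N -> D n d -> D n d' -> Gam p n (d - d') -> d = d'.
Proof.
move=> n1 hd hd' hg; apply/ffunP=> j.
have := hg j; rewrite !ffunE => /dvdzP [k hk].
have := q_sum tower j n1; have := p_pos tower j n1; have := hd j; have := hd' j.
move=> h1 h2 h3 h4.
have lt : d j - d' j < (p n j)%:Z by lia.
have gt : - (p n j)%:Z < d j - d' j by lia.
rewrite hk in lt gt; have k0 : k = 0 by nia.
by apply/eqP; rewrite -subr_eq0 hk k0 mul0r.
Qed.

Lemma box_rep_eq n (a d : Zr r) :
  (1 <= n)%N -> D n d -> Gam p n (a - d) -> box_rep n a = d.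
Proof.
move=> n1 hd hg; apply: (Dom_Gam_eq n1 (Dom_box_rep _ n1) hd).
have -> : box_rep n a - d = (a - d) - (a - box_rep n a) by Zr_ring.
exact/GamB/Gam_sub_box_rep.
Qed.

Lemma box_rep_le n k (a : Zr r) :
  (1 <= n)%N -> (n <= k)%N -> box_rep n (box_rep k a) = box_rep n a.
Proof.
move=> n1 nk; apply: (box_rep_eq n1 (Dom_box_rep _ n1)).
have -> : box_rep k a - box_rep n a = (a - box_rep n a) - (a - box_rep k a) by Zr_ring.
apply: GamB; first exact: Gam_sub_box_rep.
exact: (Gam_le n1 nk (Gam_sub_box_rep _ _)).
Qed.

Lemma box_repD_Gam n (a c : Zr r) :
  (1 <= n)%N -> Gam p n c -> box_rep n (a + c) = box_rep n a.
Proof.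
move=> n1 hc; apply: (box_rep_eq n1 (Dom_box_rep _ n1)).
by rewrite addrAC; apply: GamD => //; exact: Gam_sub_box_rep.
Qed.

Lemma DomS_decomp k (a : Zr r) : (1 <= k)%N ->
  D k.+1 a <-> exists c, [/\ D k.+1 c, Gam p k c & D k (a - c)].
Proof.
move=> k1; have k2 : (2 <= k.+1)%N by lia.
have [to from] := D_decomp tower a k2.
split; first by move/to=> [c [? ? ?]]; exists c; rewrite -vnegE -vaddE.
by move=> [c [? ? ?]]; apply: from; exists c; rewrite vnegE vaddE.
Qed.

Lemma Dom_tile n k (x : Zr r) : (1 <= n)%N -> (n <= k)%N ->
  D k x <-> exists t, [/\ Gam p n t, D k t & D n (x - t)].
Proof.
move=> n1 /subnK <-; elim: (k - n)%N x => [|d IH] x /=.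
  rewrite add0n; split=> [hx|[t [ht hdt hxt]]].
    by exists 0; rewrite subr0; split=> //; [exact: Gam0 | exact: Dom0].
  have t0 : t = 0 by apply: (Dom_Gam_eq n1 hdt (Dom0 n1)); rewrite subr0.
  by move: hxt; rewrite t0 subr0.
have dn1 : (1 <= d + n)%N by lia.
have Gam_dn c : Gam p (d + n) c -> Gam p n c by apply: Gam_le; lia.
rewrite addSn; split.
  move/(DomS_decomp _ dn1) => [c [hc gc hxc]].
  have [t [gt dt hxt]] := (IH (x - c)).1 hxc.
  exists (c + t); split; first exact/GamD/gt/Gam_dn.
    by apply/(DomS_decomp _ dn1); exists c; rewrite addrC addKr.
  by rewrite opprD addrA.
move=> [t [gt dt hxt]].
have [c [hc gc htc]] := (DomS_decomp _ dn1).1 dt.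
apply/(DomS_decomp _ dn1); exists c; split => //.
apply/IH; exists (t - c); split => //; first exact/GamB/Gam_dn.
by rewrite opprB addrA subrK.
Qed.

Lemma Dom_shift n k (x e : Zr r) : (1 <= n)%N -> (n <= k)%N -> D k x ->
  D n (box_rep n x + e) -> D k (x + e).
Proof.
move=> n1 nk hx he; have [t [gt dt hxt]] := (Dom_tile x n1 nk).1 hx.
have ht : box_rep n x = x - t by apply: box_rep_eq; rewrite // opprB addrC subrK.
by apply/(Dom_tile _ n1 nk); exists t; rewrite addrAC -ht.
Qed.

Lemma box_rep_shift n k (a e : Zr r) : (1 <= n)%N -> (n <= k)%N ->
  D n (box_rep n a + e) -> box_rep k (a + e) = box_rep k a + e.
Proof.
move=> n1 nk he; have k1 : (1 <= k)%N by lia.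
apply: (box_rep_eq k1).
  by apply: (Dom_shift n1 nk (Dom_box_rep _ k1)); rewrite box_rep_le.
by rewrite opprD addrACA subrr addr0; exact: Gam_sub_box_rep.
Qed.

Lemma Dom_box_rep_shift n k (a e : Zr r) : (1 <= n)%N -> (n <= k)%N ->
  D n (box_rep n a + e) ->
  D k (box_rep k.+1 a) <-> D k (box_rep k.+1 a + e).
Proof.
move=> n1 nk he; have nk1 : (n <= k.+1)%N by lia.
split=> h; first by apply: (Dom_shift n1 nk h); rewrite box_rep_le.
rewrite -[box_rep k.+1 a](addrK e); apply: (Dom_shift n1 nk h).
rewrite -(box_rep_shift n1 nk1 he) box_rep_le // (box_rep_shift n1 (leqnn n) he).
by rewrite addrK; exact: Dom_box_rep.
Qed.

Definition cell_parity n (a : Zr r) : {ffun 'I_r -> bool} :=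
  [ffun j => (((a j + (q1 n j)%:Z) %/ (p n j)%:Z)%Z %% 2)%Z == 0].

Lemma box_rep_parity_shift n (a a' : Zr r) : (1 <= n)%N ->
  (forall j, `|a' j - a j| < (p n j)%:Z) -> cell_parity n a = cell_parity n a' ->
  box_rep n a + (a' - a) = box_rep n a'.
Proof.
move=> n1 near /ffunP same; apply/ffunP => j; have := same j; rewrite !ffunE => sj.
have shift : a' j - a j = (a' j + (q1 n j)%:Z) - (a j + (q1 n j)%:Z) by ring.
rewrite shift addrAC modz_shift_same_parity //; last by rewrite -shift.
by have := p_pos tower j n1; lia.
Qed.

(* [level i a]: [a] lies in the paper's [Gamma_(i+1) J(i)].  These sets
   partition [Z^r]; the points of level at least [n] are the holes at stage [n]. *)
Definition level i (a : Zr r) := exists2 y, J p q1 q2 i y & Gam p i.+1 (a - y).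

Definition level_ge k (a : Zr r) := forall i, (i < k)%N -> ~ level i a.

Lemma Jf_J n i (a : Zr r) : (i <= n)%N -> Jf p q1 q2 n i a <-> J p q1 q2 i a.
Proof.
elim: n => [|n IH] hi; first by have -> : i = 0%N by lia.
case: (leqP i n) => hin; first by rewrite /= hin; apply: IH.
by have -> : i = n.+1 by lia.
Qed.

Lemma J0 (a : Zr r) : J p q1 q2 0 a <-> a = 0.
Proof. by rewrite /J /= vzeroE. Qed.

Lemma JE k (a : Zr r) : (1 <= k)%N -> J p q1 q2 k a <-> D k a /\ level_ge k a.
Proof.
case: k => [//|k] _; rewrite /J /= ltnn.
have JfE i b : (i < k.+1)%N -> Jf p q1 q2 k i b <-> J p q1 q2 i b.
  by rewrite ltnS; apply: Jf_J.
split=> [[hd hn]|[hd hge]].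
  split => // i ik [y hy hg]; apply: hn; exists i; split => //.
  by exists y; rewrite vnegE vaddE; split=> //; apply/JfE.
split => // -[i [ik [y [hy hay]]]]; apply: (hge i ik).
by exists y; [apply/JfE | rewrite -vnegE -vaddE].
Qed.

Lemma J_Dom k (y : Zr r) : (1 <= k)%N -> J p q1 q2 k y -> D k y.
Proof. by move=> k1 /(JE _ k1) []. Qed.

Lemma levelD_Gam i (a c : Zr r) : level i a -> Gam p i.+1 c -> level i (a + c).
Proof. by move=> [y hy hg] hc; exists y; rewrite // addrAC; apply: GamD. Qed.

Lemma level0 (a : Zr r) : level 0 a <-> Gam p 1 a.
Proof.
split; first by move=> [y /J0 ->]; rewrite subr0.
by move=> ha; exists 0; [apply/J0 | rewrite subr0].
Qed.

Lemma level_geD_Gam k (a c : Zr r) : level_ge k a -> Gam p k c -> level_ge k (a + c).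
Proof.
move=> hge hc i ik hl; apply: (hge i ik); rewrite -[a](addrK c).
by apply: levelD_Gam hl _; apply/GamN/(Gam_le _ ik hc).
Qed.

Lemma level_geS k (a : Zr r) : level_ge k.+1 a <-> level_ge k a /\ ~ level k a.
Proof.
split=> [hge|[hge hk] i]; first by split=> [i ik|]; apply: hge => //; lia.
by rewrite ltnS leq_eqVlt => /predU1P [-> | /hge].
Qed.

Lemma level_uniq i i' (a : Zr r) : level i a -> level i' a -> i = i'.
Proof.
wlog ii' : i i' / (i < i')%N.
  by move=> W h h'; case: (ltngtP i i') => ii'; [exact: W h h' | apply/esym/W | ].
move=> hl [y' hy' hg']; have [_ hge] := (JE _ (leq_ltn_trans (leq0n i) ii')).1 hy'.
case: (hge i ii'); have -> : y' = a + (y' - a) by rewrite addrC subrK.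
apply: levelD_Gam hl _; rewrite -opprB; apply/GamN/(Gam_le _ _ hg') => //; lia.
Qed.

Lemma level_exists (a : Zr r) : exists i, level i a.
Proof.
have [N [N1 hN]] := D_cover tower a.
have [[i [_ hi]]|none] := pselect (exists i, (i < N)%N /\ level i a); first by exists i.
exists N; exists a; last by rewrite subrr; exact: Gam0.
by apply/(JE _ N1); split => // i iN hi; apply: none; exists i.
Qed.

Lemma level_box_rep k (a : Zr r) : (1 <= k)%N -> level_ge k a ->
  level k a <-> D k (box_rep k.+1 a).
Proof.
move=> k1 hge; split=> [[y hy hg]|hd].
  by have dy := J_Dom k1 hy; rewrite (box_rep_eq _ (D_nest tower k1 dy) hg).
exists (box_rep k.+1 a); last exact: Gam_sub_box_rep.
apply/(JE _ k1); split => //.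
have -> : box_rep k.+1 a = a + (box_rep k.+1 a - a) by rewrite addrC subrK.
by apply: level_geD_Gam hge _; rewrite -opprB; apply/GamN/(Gam_le k1 _ (Gam_sub_box_rep _ _)).
Qed.

Lemma J_Gam_eq k (y y' : Zr r) : J p q1 q2 k y -> J p q1 q2 k y' ->
  ((0 < k)%N -> Gam p k (y - y')) -> y = y'.
Proof.
case: k => [|k] hy hy' hg; first by move/J0: hy => ->; move/J0: hy' => ->.
exact: (Dom_Gam_eq _ (J_Dom _ hy) (J_Dom _ hy') (hg _)).
Qed.

Lemma J_succ k (y c : Zr r) : J p q1 q2 k y -> ((0 < k)%N -> Gam p k c) ->
  ~ Gam p k.+1 c -> J p q1 q2 k.+1 (box_rep k.+1 (y + c)).
Proof.
move=> hy hc hnc; apply/JE => //; split; first exact: Dom_box_rep.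
move=> i; rewrite ltnS => ik hl.
have ik1 : (i.+1 <= k.+1)%N by lia.
have {hl} : level i (y + c).
  have := levelD_Gam hl (Gam_le (ltn0Sn i) ik1 (Gam_sub_box_rep k.+1 (y + c))).
  by rewrite addrC subrK.
case: (ltngtP i k) ik => [ik _ hl|//|eik _ [y' hy' hg]]; last first.
  subst i; have eyy' : y = y'.
    apply: (J_Gam_eq hy hy') => k0; rewrite -[y](addrK c) addrAC.
    by apply: GamB (hc k0); apply: (Gam_le k0 _ hg).
  by subst y'; rewrite addrC addKr in hg.
have [_ hge] := (JE _ (leq_ltn_trans (leq0n i) ik)).1 hy.
apply: (hge i ik); rewrite -[y](addrK c).
by apply: levelD_Gam hl _; apply/GamN/(Gam_le _ ik (hc _)); lia.
Qed.

Lemma J_nonempty (j0 : 'I_r) k : exists y, J p q1 q2 k y.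
Proof.
elim: k => [|k [y hy]]; first by exists 0; apply/J0.
have [P [P_gt0 P_lt P_dvd]] :
    exists P, [/\ (0 < P)%N, (P < p k.+1 j0)%N & (0 < k)%N -> (p k j0 %| P)%N].
  case: k {hy} => [|k]; first by exists 1%N; split=> //; have := p_big tower j0 (ltnSn 0); lia.
  exists (p k.+1 j0); split => //; [exact: (p_pos tower) | exact: (p_incr tower)].
pose c : Zr r := [ffun j => ((j == j0) * P)%:Z].
exists (box_rep k.+1 (y + c)); apply: J_succ hy _ _.
  move=> k0 j; rewrite ffunE; case: eqP => [->|_]; last by rewrite mul0n dvdz0.
  by rewrite mul1n dvdzE P_dvd.
by move/(_ j0); rewrite ffunE eqxx mul1n dvdzE => /dvdn_leq; lia.
Qed.

Lemma level_witness k (c : Zr r) : ((0 < k)%N -> Gam p k c) -> ~ Gam p k.+1 c ->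
  exists a, [/\ D k.+2 a, level k a & level k.+1 (c + a)].
Proof.
move=> hc hnc.
have [j0 _] : exists j0, ~ (c j0 \in dvdz (p k.+1 j0)%:Z) by apply/existsNP.
have [y hy] := J_nonempty j0 k.
set d := box_rep k.+1 (y + c); have hd : J p q1 q2 k.+1 d by exact: J_succ.
set a := box_rep k.+2 (d - c).
have ga : Gam p k.+2 (d - c - a) by exact: Gam_sub_box_rep.
exists a; split; first exact: Dom_box_rep.
  exists y => //; have -> : a - y = - (d - c - a) - (y + c - d) by Zr_ring.
  by apply: GamB; [apply/GamN/(Gam_le _ _ ga) | exact: Gam_sub_box_rep].
exists d => //; have -> : c + a - d = - (d - c - a) by Zr_ring.
exact: GamN.
Qed.

(* Level [k] is decided by whether [box_rep (k+1)] lies in [D_k]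
   ([level_box_rep]), and the translation does not change that
   ([Dom_box_rep_shift]). *)
Lemma level_ge_shift n k (a e : Zr r) : (1 <= n)%N -> (n <= k)%N ->
  level_ge n a -> level_ge n (a + e) -> D n (box_rep n a + e) ->
  level_ge k a <-> level_ge k (a + e).
Proof.
move=> n1 /subnK <- ga gae he; elim: (k - n)%N => [|d IH] //; rewrite addSn.
have k1 : (1 <= d + n)%N by lia.
have nk : (n <= d + n)%N by lia.
have nk1 : (n <= (d + n).+1)%N by lia.
rewrite !level_geS; split=> [[g1 g2]|[g1 g2]].
- have g1' := IH.1 g1; split => //.
  rewrite (level_box_rep k1 g1') (box_rep_shift n1 nk1 he) -(Dom_box_rep_shift n1 nk he).
  by rewrite -(level_box_rep k1 g1).
- have g1' := IH.2 g1; split => //.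
  rewrite (level_box_rep k1 g1') (Dom_box_rep_shift n1 nk he) -(box_rep_shift n1 nk1 he).
  by rewrite -(level_box_rep k1 g1).
Qed.

Lemma level_shift n (a e : Zr r) : (1 <= n)%N ->
  level_ge n a -> level_ge n (a + e) -> D n (box_rep n a + e) ->
  forall l, level l a -> level l (a + e).
Proof.
move=> n1 ga gae he l hl.
have nl : (n <= l)%N by rewrite leqNgt; apply/negP => ln; exact: ga l ln hl.
have gl : level_ge l a by move=> i il hi; have := level_uniq hi hl; lia.
have [i hi] := level_exists (a + e).
case: (ltngtP i l) => [il|li|<- //].
  by case: ((level_ge_shift n1 nl ga gae he).1 gl i il hi).
have : level_ge l.+1 (a + e) by move=> i' il' hi'; have := level_uniq hi' hi; lia.
by move/(level_ge_shift n1 (leqW nl) ga gae he)/(_ l (ltnSn l)).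
Qed.

End Tower.
End Lattice.

Lemma separating_seq (T : eqType) (I : finType) (A : Type) (y : I -> T -> A) :
  (forall i i', (forall h, y i h = y i' h) -> i = i') ->
  exists F : seq T, forall i i', {in F, forall h, y i h = y i' h} -> i = i'.
Proof.
move=> y_inj.
have /fin_all_exists [Fs FsP] : forall ii : I * I,
    exists Fi : seq T, {in Fi, forall h, y ii.1 h = y ii.2 h} -> ii.1 = ii.2.
  move=> [i i'] /=; have [[h ne]|all_eq] := pselect (exists h, y i h <> y i' h).
    by exists [:: h] => /(_ h (mem_head _ _)).
  exists [::] => _; apply: y_inj => h.
  by have [//|ne] := pselect (y i h = y i' h); case: all_eq; exists h.
exists (flatten [seq Fs ii | ii <- enum {: I * I}]) => i i' eq_F.
apply: (FsP (i, i')) => h hF; apply: eq_F; apply/flattenP; exists (Fs (i, i')) => //.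
by apply: map_f; rewrite mem_enum.
Qed.

Lemma uniform_bound (T : eqType) (P : T -> nat -> Prop) (s : seq T) :
  (forall x B B', (B <= B')%N -> P x B -> P x B') ->
  (forall x, x \in s -> exists B, P x B) -> exists B, forall x, x \in s -> P x B.
Proof.
move=> P_mono; elim: s => [|x s IH] hs; first by exists 0%N.
have [Bx hx] := hs x (mem_head _ _).
have [Bs hBs] : exists B, forall x', x' \in s -> P x' B.
  by apply: IH => x' hx'; apply: hs; rewrite inE hx' orbT.
exists (maxn Bx Bs) => x'; rewrite inE => /predU1P [-> | hx'].
  exact: P_mono (leq_maxl _ _) hx.
exact: P_mono (leq_maxr _ _) (hBs x' hx').
Qed.

(* [y] restricted to [F] is determined by its values at the [hole]s, and
   those only depend on the [code], whence an injection into [{ffun C -> A}]. *)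
Lemma card_coded_family (T : eqType) (C A : finType) (a0 : A) (F : seq T)
    (hole : pred T) (code : T -> C) k (y : 'I_k -> T -> option A) :
  (forall i i', {in F, forall h, y i h = y i' h} -> i = i') ->
  {in F, forall h, ~~ hole h -> forall i i', y i h = y i' h} ->
  {in F &, forall h h', hole h -> hole h' -> code h = code h' ->
     forall i, y i h = y i h'} ->
  {in F, forall h, hole h -> forall i, y i h != None} ->
  (k <= #|A| ^ #|C|)%N.
Proof.
move=> y_sep nonhole same_code defined.
pose Phi i : {ffun C -> A} := [ffun kk =>
  if [seq h <- F | hole h && (code h == kk)] is h0 :: _ then odflt a0 (y i h0) else a0].
suff Phi_inj : injective Phi by rewrite -card_ffun -[k]card_ord; apply: leq_card Phi_inj.
move=> i i' /ffunP /(_ _) ePhi; apply: y_sep => h hF.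
have [hh|nh] := boolP (hole h); last exact: nonhole.
have := ePhi (code h); rewrite !ffunE.
have : h \in [seq h0 <- F | hole h0 && (code h0 == code h)] by rewrite mem_filter hh eqxx.
case E: [seq h0 <- F | _] => [//|h0 t] _.
have : h0 \in [seq h0 <- F | hole h0 && (code h0 == code h)] by rewrite E mem_head.
rewrite mem_filter => /andP [/andP [hh0 /eqP c0] hF0].
rewrite !(same_code h0 h) //.
by case: (y i h) (defined h hF hh i) => // ?; case: (y i' h) (defined h hF hh i') => // ? _ _ /= ->.
Qed.

Lemma alpha_neq_beta m i : (0 < m)%N -> alpha m i != beta m.
Proof. by case: m. Qed.

Lemma alpha_neqS m k : (2 <= m)%N -> alpha m k != alpha m k.+1.
Proof.
case: m => [//|m] hm; apply/eqP => -[] /(congr1 val); rewrite /= !inordK ?ltn_pmod //.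
rewrite addSn modnS; case: ifP => [mk|_]; last by lia.
move=> /esym/eqP; rewrite eq_sym => mk'; have := dvdn_sub mk mk'.
by rewrite subSn // subnn dvdn1; lia.
Qed.

Section AbstractGroup.
Variables (G : Type) (mul : G -> G -> G) (inv : G -> G) (e : G).
Hypothesis hG : is_group mul inv e.

Lemma gmulA x y z : mul x (mul y z) = mul (mul x y) z.
Proof. by case: hG. Qed.

Lemma gmul1g x : mul e x = x.
Proof. by case: hG. Qed.

Lemma gmulVg x : mul (inv x) x = e.
Proof. by case: hG. Qed.

Lemma gmulKg x y : mul (inv x) (mul x y) = y.
Proof. by rewrite gmulA gmulVg gmul1g. Qed.

Lemma gmulI x y z : mul x y = mul x z -> y = z.
Proof. by move=> eq_xy; rewrite -(gmulKg x y) eq_xy gmulKg. Qed.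

Lemma gmulgV x : mul x (inv x) = e.
Proof.
rewrite -[mul x (inv x)]gmul1g -{1}(gmulVg (inv x)) -gmulA (gmulA (inv x) x).
by rewrite gmulVg gmul1g gmulVg.
Qed.

Lemma gmulg1 x : mul x e = x.
Proof. by rewrite -(gmulVg x) gmulA gmulgV gmul1g. Qed.

Lemma gmulKVg x y : mul x (mul (inv x) y) = y.
Proof. by rewrite gmulA gmulgV gmul1g. Qed.

Lemma ginvgK x : inv (inv x) = x.
Proof. by apply: (gmulI (x := inv x)); rewrite gmulgV gmulVg. Qed.

Lemma ginvMg x y : inv (mul x y) = mul (inv y) (inv x).
Proof.
apply: (gmulI (x := mul x y)); rewrite gmulgV -gmulA (gmulA y) gmulgV gmul1g.
by rewrite gmulgV.
Qed.

End AbstractGroup.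

Section ToeplitzFibres.
Variables (G : countType) (mul : G -> G -> G) (inv : G -> G) (e : G).
Hypothesis hG : is_group mul inv e.
Variables (r : nat) (iota : Zr r -> G).
Hypothesis iota_inj : injective iota.
Hypothesis iota_hom : forall a b, iota (vadd a b) = mul (iota a) (iota b).
Hypothesis iota_normal : forall g a, exists b, mul (mul g (iota a)) (inv g) = iota b.
Variable R : seq G.
Hypothesis R_uniq : uniq R.
Hypothesis R_one : e \in R.
Hypothesis R_rep : forall g, exists! rho, rho \in R /\ exists a, g = mul (iota a) rho.
Variables p q1 q2 : nat -> 'I_r -> nat.
Hypothesis tower : box_tower p q1 q2.
Variables (m : nat) (eta : G -> Sigma m).
Hypothesis hm : (2 <= m)%N.
Hypothesis eta_G1 : forall a, Gam p 1 a -> eta (iota a) = alpha m 1.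
Hypothesis eta_beta : forall a rho, Gam p 1 a -> rho \in R -> rho <> e ->
  eta (mul (iota a) rho) = beta m.
Hypothesis eta_n : forall n a y rho, (1 <= n)%N -> Gam p n.+1 a -> J p q1 q2 n y ->
  rho \in R -> eta (mul (iota (vadd a y)) rho) = alpha m n.+1.

Local Notation D := (Dom q1 q2).
Local Notation level := (level p q1 q2).
Local Notation level_ge := (level_ge p q1 q2).
Local Notation Cset := (Cset mul inv iota p eta).
Local Notation Per := (Per mul inv iota p eta).

Lemma iotaD (a b : Zr r) : iota (a + b) = mul (iota a) (iota b).
Proof. by rewrite -vaddE iota_hom. Qed.

Lemma iota0 : iota 0 = e.
Proof. by apply: (gmulI hG (x := iota 0)); rewrite -iotaD addr0 (gmulg1 hG). Qed.

Lemma iotaN (a : Zr r) : iota (- a) = inv (iota a).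
Proof. by apply: (gmulI hG (x := iota a)); rewrite -iotaD subrr iota0 (gmulgV hG). Qed.

Definition level_symbol i (rho : G) : Sigma m :=
  if (i == 0%N) && (rho != e) then beta m else alpha m i.+1.

Lemma eta_level i a rho : level i a -> rho \in R ->
  eta (mul (iota a) rho) = level_symbol i rho.
Proof.
rewrite /level_symbol; case: i => [|i] hl hR /=; last first.
  by move: hl => [y hy hg]; rewrite -[a](subrK y) -vaddE; apply: eta_n.
move/level0: hl => ha; case: eqVneq => [->|/eqP ne] /=; last exact: eta_beta.
by rewrite (gmulg1 hG); apply: eta_G1.
Qed.

Lemma eta_iota_neq_beta a : eta (iota a) != beta m.
Proof.
have [i hi] := level_exists tower a.
rewrite -(gmulg1 hG (iota a)) (eta_level hi R_one) /level_symbol eqxx andbF.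
by apply: alpha_neq_beta; lia.
Qed.

Lemma Per_level n i b rho : (i < n)%N -> level i b -> rho \in R ->
  Per n (level_symbol i rho) (mul (iota b) rho).
Proof.
move=> i_lt hl hR c hc; rewrite (gmulA hG) -iotaN -iotaD addrC.
by apply: eta_level => //; apply: levelD_Gam hl _; apply/GamN/(Gam_le tower _ i_lt hc).
Qed.

Lemma Cset_Per n z al g : Cset n z -> Per n al g -> z g = al.
Proof.
move=> [_ hz] hp; have := (hz al g).2 hp 0 (Gam0 _ _).
by rewrite iota0 -[inv e](gmulg1 hG) (gmulVg hG) (gmul1g hG).
Qed.

(* Were the [R]-component [rho] of [t^-1] nontrivial, [t rho] would lie in [G']
   by normality, where [eta] never reads [beta], while [z rho = beta]. *)
Lemma Cset_window_lattice n z t (W : seq G) : (1 <= n)%N -> Cset n z ->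
  (forall g, g \in W -> z g = eta (mul t g)) -> {subset R <= W} ->
  exists c, t = iota c.
Proof.
move=> n1 hC hW RW.
have [rho [[hR [v hv]] _]] := R_rep (inv t).
have t_E : t = mul (inv rho) (iota (- v)).
  by rewrite -[t](ginvgK hG) hv (ginvMg hG) iotaN.
have [rho_e | ne] := eqVneq rho e.
  by exists (- v); rewrite t_E rho_e -[inv e](gmulg1 hG) (gmulVg hG) (gmul1g hG).
have z_rho : z rho = beta m.
  have := Per_level n1 ((level0 _ _ _ _).2 (Gam0 p 1)) hR.
  rewrite iota0 (gmul1g hG) /level_symbol ne => /(Cset_Per hC) //.
have [w hw] := iota_normal (inv rho) (- v).
have := eta_iota_neq_beta w; rewrite -hw (ginvgK hG) -t_E -hW ?RW // z_rho.
by rewrite eqxx.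
Qed.

(* A first [k] with [c] outside [Gamma_(k+1)] would give, by [level_witness], a
   point of [D_(n+1)] where [z] reads [alpha (k+1)] but [eta (iota c * _)]
   reads [alpha (k+2)]. *)
Lemma Cset_window_Gam n z c (W : seq G) : (1 <= n)%N -> Cset n z ->
  (forall g, g \in W -> z g = eta (mul (iota c) g)) ->
  (forall a, D n.+1 a -> iota a \in W) -> Gam p n c.
Proof.
move=> n1 hC hW DW.
have eta_c i a : (i < n)%N -> level i a -> D n.+1 a -> eta (iota (c + a)) = alpha m i.+1.
  move=> i_lt hl hd; have := Cset_Per hC (Per_level i_lt hl R_one).
  by rewrite /level_symbol eqxx andbF (gmulg1 hG) hW ?DW // -iotaD.
suff Gam_k k : (k <= n)%N -> (0 < k)%N -> Gam p k c by exact: Gam_k.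
elim: k => [//|k IH] kn _; have [//|hnc] := pselect (Gam p k.+1 c).
have [a [hd hl hl1]] := level_witness tower (IH (ltnW kn)) hnc.
have := alpha_neqS k.+1 hm; rewrite -(eta_c k a kn hl); last first.
  have kn2 : (k.+2 <= n.+1)%N by lia.
  exact: (Dom_le tower (ltn0Sn _) kn2 hd).
by rewrite -(gmulg1 hG (iota (c + a))) (eta_level hl1 R_one) /level_symbol !eqxx.
Qed.

Lemma coset_decomposition g :
  exists bc : Zr r * G, (bc.2 \in R) && (g == mul (iota bc.1) bc.2).
Proof. by have [rho [[hR [a ->]] _]] := R_rep g; exists (a, rho); rewrite hR eqxx. Qed.

Definition lattice_part g := (xchoose (coset_decomposition g)).1.
Definition coset_rep g := (xchoose (coset_decomposition g)).2.

Lemma coset_rep_in g : coset_rep g \in R.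
Proof. by case/andP: (xchooseP (coset_decomposition g)). Qed.

Lemma coset_decompE g : g = mul (iota (lattice_part g)) (coset_rep g).
Proof. by case/andP: (xchooseP (coset_decomposition g)) => _ /eqP. Qed.

Lemma mul_iota_decomp c g :
  mul (iota c) g = mul (iota (c + lattice_part g)) (coset_rep g).
Proof. by rewrite {1}(coset_decompE g) (gmulA hG) iotaD. Qed.

Lemma fiber_point_form gs y n (F : seq G) : (1 <= n)%N ->
  pi_is mul inv iota p eta y gs ->
  exists2 c, Gam p n c & forall h, h \in F -> y h = eta (mul (iota c) (mul (gs n) h)).
Proof.
move=> n1 /(_ n n1) [z [hC hz]].
have [bs hbs] := Dom_finite q1 q2 n.+1.
set W := [seq mul (gs n) h | h <- F] ++ R ++ [seq iota a | a <- bs].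
have [s hs] := hC.1 W.
have [c ec] : exists c, inv s = iota c.
  by apply: (Cset_window_lattice n1 hC hs) => rho hR; rewrite !mem_cat hR orbT.
have hc : Gam p n c.
  apply: (Cset_window_Gam (W := W) n1 hC) => [g hg | a ha]; first by rewrite hs // /shift ec.
  by rewrite !mem_cat map_f ?orbT ?hbs.
exists c => // h hF; rewrite hz /shift (ginvgK hG) hs /shift ?ec //.
by rewrite mem_cat map_f.
Qed.

Lemma conj_lattice_diff g h h' (cg b b' : Zr r) rhog rho :
  g = mul (iota cg) rhog -> mul g h = mul (iota b) rho -> mul g h' = mul (iota b') rho ->
  iota (b' - b) = mul (mul rhog (mul h' (inv h))) (inv rhog).
Proof.
move=> hg hb hb'.
have e1 : iota (b' - b) = mul g (mul (mul h' (inv h)) (inv g)).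
  rewrite -!(gmulA hG) -(ginvMg hG) (gmulA hG) hb hb' (ginvMg hG) -(gmulA hG).
  by rewrite (gmulKVg hG) iotaD iotaN.
have e2 : rhog = mul (iota (- cg)) g by rewrite hg (gmulA hG) -iotaD addNr iota0 (gmul1g hG).
have e3 : iota (b' - b) = mul (mul (iota (- cg)) (iota (b' - b))) (iota cg).
  by rewrite -!iotaD addrAC addNr add0r.
by rewrite e2 (ginvMg hG) -iotaN opprK e3 e1 -!(gmulA hG).
Qed.

(* The conjugates do not depend on [n], while [p n] grows with [n]. *)
Lemma displacement_bound (F : seq G) : exists2 n, (1 <= n)%N &
  forall rho h h' (d : Zr r), rho \in R -> h \in F -> h' \in F ->
    iota d = mul (mul rho (mul h' (inv h))) (inv rho) ->
    forall j, `|d j| < (p n j)%:Z.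
Proof.
pose P (t : G * (G * G)) B := forall d : Zr r,
  iota d = mul (mul t.1 (mul t.2.2 (inv t.2.1))) (inv t.1) -> forall j, (`|d j| <= B)%N.
have [B hB] : exists B, forall t, t \in [seq (rho, hh) | rho <- R,
    hh <- [seq (h, h') | h <- F, h' <- F]] -> P t B.
  apply: uniform_bound => [t B B' le_BB' hP d hd j | t _].
    exact: leq_trans (hP d hd j) le_BB'.
  have [[d hd]|none] := pselect (exists d, iota d =
      mul (mul t.1 (mul t.2.2 (inv t.2.1))) (inv t.1)).
    exists (\max_j `|d j|)%N => d' hd' j.
    by rewrite (iota_inj (etrans hd' (esym hd))); apply: leq_bigmax.
  by exists 0%N => d hd; case: none; exists d.
exists B.+1 => // rho h h' d hR hF hF' hd j.
have t_in : (rho, (h, h')) \in [seq (rho, hh) | rho <- R,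
    hh <- [seq (h, h') | h <- F, h' <- F]].
  by apply/allpairsP; exists (rho, (h, h')); split=> //; apply/allpairsP; exists (h, h').
have B_lt : (B < p B.+1 j)%N by move: (p_big tower j (ltn0Sn B)); clear; lia.
by rewrite -abszE ltz_nat (leq_ltn_trans (hB _ t_in d hd j) B_lt).
Qed.

Lemma eta_nonhole n c h : Gam p n c -> ~ level_ge n (lattice_part h) ->
  eta (mul (iota c) h) = eta h.
Proof.
move=> hc nh; have [i [i_lt hl]] : exists i, (i < n)%N /\ level i (lattice_part h).
  by have [//|none] := pselect (exists i, (i < n)%N /\ level i (lattice_part h));
    case: nh => i i_lt hi; apply: none; exists i.
rewrite -{2}[h](gmul1g hG) -iota0 (mul_iota_decomp c h) (mul_iota_decomp 0 h) add0r addrC.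
rewrite (eta_level hl (coset_rep_in h)).
by rewrite (eta_level (levelD_Gam hl (Gam_le tower _ i_lt hc)) (coset_rep_in h)).
Qed.

Lemma eta_hole_neq_beta n c h : (1 <= n)%N -> Gam p n c ->
  level_ge n (lattice_part h) -> eta (mul (iota c) h) != beta m.
Proof.
move=> n1 hc hge; rewrite mul_iota_decomp addrC.
have [l hl] := level_exists tower (lattice_part h + c).
have nl : (n <= l)%N.
  by rewrite leqNgt; apply/negP => ln; apply: (level_geD_Gam tower hge hc) ln hl.
rewrite (eta_level hl (coset_rep_in h)) /level_symbol.
have /negbTE -> /= : l != 0%N by move: n1 nl; clear; lia.
by apply: alpha_neq_beta; apply: ltnW.
Qed.

Lemma eta_hole_same_cell n c h h' : (1 <= n)%N -> Gam p n c ->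
  level_ge n (lattice_part h) -> level_ge n (lattice_part h') ->
  coset_rep h = coset_rep h' ->
  (forall j, `|lattice_part h' j - lattice_part h j| < (p n j)%:Z) ->
  cell_parity p q1 n (lattice_part h) = cell_parity p q1 n (lattice_part h') ->
  eta (mul (iota c) h) = eta (mul (iota c) h').
Proof.
move=> n1 hc ge ge' same_rep near same_par; rewrite (mul_iota_decomp c h) (mul_iota_decomp c h') -same_rep.
set b := lattice_part h; set b' := lattice_part h'.
have cbE : c + b + (b' - b) = c + b' by rewrite -addrA [b + _]addrC subrK.
have ge_cb : level_ge n (c + b) by rewrite addrC; exact: level_geD_Gam.
have ge_cb' : level_ge n (c + b + (b' - b)) by rewrite cbE addrC; exact: level_geD_Gam.
have D_shift : D n (box_rep p q1 n (c + b) + (b' - b)).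
  rewrite [c + b]addrC (box_repD_Gam tower _ n1 hc) (box_rep_parity_shift tower n1 near same_par).
  exact: (Dom_box_rep tower _ n1).
have [l hl] := level_exists tower (c + b).
have := level_shift tower n1 ge_cb ge_cb' D_shift hl; rewrite cbE => hl'.
by rewrite (eta_level hl (coset_rep_in h)) (eta_level hl' (coset_rep_in h)).
Qed.

Lemma fiber_card_le gs k (y : 'I_k -> G -> Sigma m) :
  (forall i, pi_is mul inv iota p eta (y i) gs) ->
  (forall i i', (forall h, y i h = y i' h) -> i = i') ->
  (k <= m ^ (2 ^ r * size R))%N.
Proof.
move=> y_pi y_inj; have [F F_sep] := separating_seq y_inj.
have [n n1 n_big] := displacement_bound F.
set g := gs n; pose b h := lattice_part (mul g h).
have /fin_all_exists [c cP] : forall i, exists c,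
    Gam p n c /\ forall h, h \in F -> y i h = eta (mul (iota c) (mul g h)).
  by move=> i; have [c ? ?] := fiber_point_form F n1 (y_pi i); exists c.
pose hole h := `[< level_ge n (b h) >].
pose code h : seq_sub R * {ffun 'I_r -> bool} :=
  (SeqSub (coset_rep_in (mul g h)), cell_parity p q1 n (b h)).
have m_gt0 : (0 < m)%N by apply: ltnW.
have := card_coded_family (Ordinal m_gt0) F_sep (hole := hole) (code := code).
have card_codes : #|{: seq_sub R * {ffun 'I_r -> bool}}| = (2 ^ r * size R)%N.
  by rewrite card_prod card_ffun card_bool card_ord card_seq_sub // mulnC.
rewrite card_ord card_codes; apply=> [h hF /asboolPn nh i i' | h h' hF hF' /asboolP hh /asboolP hh' /(congr1 (fun x => (ssval x.1, x.2))) [= same_rep same_par] i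
        | h hF /asboolP hh i].
- by rewrite !(cP _).2 // !(eta_nonhole (cP _).1 nh).
- rewrite !(cP _).2 //; apply: (eta_hole_same_cell n1 (cP i).1 hh hh' same_rep _ same_par) => j.
  have := n_big _ _ _ (b h' - b h) (coset_rep_in g) hF hF'.
  rewrite /b; move=> /(_ _ j); rewrite !ffunE; apply.
  apply: (conj_lattice_diff (coset_decompE g) (coset_decompE (mul g h))).
  by rewrite same_rep; exact: coset_decompE.
- by rewrite (cP _).2 //; apply: eta_hole_neq_beta (cP _).1 hh.
Qed.

End ToeplitzFibres.

Local Close Scope ring_scope.
Unset Implicit Arguments.

(* The bound holds for the whole fibre over [gs], whether or not [x] lies in
   it. *)
Theorem proposition4p35
  (G : countType) (mul : G -> G -> G) (inv : G -> G) (e : G)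
  (hG : is_group mul inv e)
  (r : nat) (iota : Zr r -> G)
  (iota_inj : injective iota)
  (iota_hom : forall a b, iota (vadd a b) = mul (iota a) (iota b))
  (iota_normal : forall g a, exists b, mul (mul g (iota a)) (inv g) = iota b)
  (R : seq G) (R_uniq : uniq R) (R_one : e \in R)
  (R_rep : forall g, exists! rho, rho \in R /\ exists a, g = mul (iota a) rho)
  (p : nat -> 'I_r -> nat)
  (p_pos : forall i j, (1 <= i)%N -> (0 < p i j)%N)
  (p_incr : forall i j, (1 <= i)%N -> (p i j < p i.+1 j)%N)
  (p_dvd : forall i j, (1 <= i)%N -> (p i j %| p i.+1 j)%N)
  (p_big : forall i j, (1 <= i)%N -> (2 * i + 1 < p i j)%N)
  (p_index : forall i, (1 <= i)%N -> index_cond (gindex p i) i)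
  (q1 q2 : nat -> 'I_r -> nat)
  (q_big : forall i j, (1 <= i)%N -> (i < q1 i j)%N /\ (i < q2 i j)%N)
  (q_sum : forall i j, (1 <= i)%N -> (q1 i j + q2 i j)%N = p i j)
  (D_one : forall i, (1 <= i)%N -> Dom q1 q2 i (vzero r))
  (D_nest : forall i a, (1 <= i)%N -> Dom q1 q2 i a -> Dom q1 q2 i.+1 a)
  (D_cover : forall a, exists i, (1 <= i)%N /\ Dom q1 q2 i a)
  (D_decomp : forall i a, (2 <= i)%N ->
      (Dom q1 q2 i a <->
       exists c, [/\ Dom q1 q2 i c, Gam p i.-1 c & Dom q1 q2 i.-1 (vadd a (vneg c))]))
  (m : nat) (hm : (2 <= m)%N)
  (eta : G -> Sigma m)
  (eta_G1 : forall a, Gam p 1 a -> eta (iota a) = alpha m 1)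
  (eta_beta : forall a rho, Gam p 1 a -> rho \in R -> rho <> e ->
      eta (mul (iota a) rho) = beta m)
  (eta_n : forall n a y rho, (1 <= n)%N -> Gam p n.+1 a -> J p q1 q2 n y -> rho \in R ->
      eta (mul (iota (vadd a y)) rho) = alpha m n.+1) :
  forall x : G -> Sigma m,
    in_orbit_closure mul inv eta x ->
    forall gs : nat -> G, pi_is mul inv iota p eta x gs ->
      card_le (fun y => in_orbit_closure mul inv eta y /\ pi_is mul inv iota p eta y gs)
              (m ^ (2 ^ r * size R)).
Proof.
move=> x _ gs _ k y y_fiber y_inj.
have tower : box_tower p q1 q2 by constructor.
exact: (fiber_card_le hG iota_inj iota_hom iota_normal R_uniq R_one R_rep tower hm
          eta_G1 eta_beta eta_n (fun i => (y_fiber i).2) y_inj).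
Qed.
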